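(* Let $I\subseteq[0,\infty)$ be an interval, let $f:I\to\mathbb{R}$ be twice differentiable on $I^\circ$, and let $a,b\in I^\circ$ with $a<b$ such that $f''\in L^1[a,b]$. Let $q\ge1$ and assume $|f''|^q$ is quasi-convex on $[a,b]$. Let $d: a=x_0<x_1<\dots<x_n=b$ be a partition of $[a,b]$, let $T(f,d)=\sum_{i=0}^{n-1}\frac{f(x_i)+f(x_{i+1})}{2}(x_{i+1}-x_i)$ and $E(f,d)=\int_a^b f(x)\,dx-T(f,d)$. Then $$|E(f,d)|\le \frac14\left(\frac{2}{(q+1)(q+2)}\right)^{\frac1q}\sum_{i=0}^{n-1}(x_{i+1}-x_i)^3\left(\max\{|f''(x_i)|^q,|f''(x_{i+1})|^q\}\right)^{\frac1q}.$$
   Context: A function $g:[a,b]\to\mathbb{R}$ is quasi-convex on $[a,b]$ if $g(\lambda x+(1-\lambda)y)\le\max\{g(x),g(y)\}$ for all $x,y\in[a,b]$ and $\lambda\in[0,1]$. *)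

From Stdlib Require Import Reals Lra List.
Import ListNotations.
Open Scope R_scope.

(* Real power x^p for x >= 0, with the convention 0^p = 0 (p > 0).
   Stdlib's Rpower 0 p is exp (p * ln 0) = 1, so we patch the case x = 0. *)
Definition rpow (x p : R) : R :=
  if Req_EM_T x 0 then 0 else Rpower x p.

Definition rsum (n : nat) (g : nat -> R) : R :=
  fold_right Rplus 0 (map g (seq 0 n)).

Definition is_interval (I : R -> Prop) : Prop :=
  forall x y z, I x -> I z -> x <= y <= z -> I y.

Definition quasi_convex_on (g : R -> R) (a b : R) : Prop :=
  forall x y l, a <= x <= b -> a <= y <= b -> 0 <= l <= 1 ->
    g (l * x + (1 - l) * y) <= Rmax (g x) (g y).

Definition is_partition (a b : R) (n : nat) (x : nat -> R) : Prop :=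
  x 0%nat = a /\ x n = b /\ forall i, (i < n)%nat -> x i < x (S i).

Definition trap (f : R -> R) (n : nat) (x : nat -> R) : R :=
  rsum n (fun i => (f (x i) + f (x (S i))) / 2 * (x (S i) - x i)).

Definition trap_err (f : R -> R) (a b : R) (pr : Riemann_integrable f a b)
  (n : nat) (x : nat -> R) : R :=
  RiemannInt pr - trap f n x.

From Stdlib Require Import Reals Lra Lia List.
From Coquelicot Require Import Coquelicot.
Open Scope R_scope.

(* The bound of the theorem is a weakening of the classical sup-norm estimate
   for the trapezoidal rule on one cell [c,d]:
       | \int_c^d f - (f c + f d)/2 (d - c) | <= K (d - c)^3 / 12
   whenever |f''| <= K on [c,d].  We prove this by two comparisons of
   derivatives: psi t = (f t - f c)/2 - (t - c)/2 f' t has derivative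
   -(t - c) f'' t / 2, hence |psi t| <= K (t - c)^2 / 4, and the error
   function phi t = \int_c^t f - (t - c)/2 (f c + f t) has derivative psi.
   On each cell [x_i, x_{i+1}] quasi-convexity of |f''|^q gives
   |f''| <= M_i^{1/q} with M_i = max(|f''(x_i)|^q, |f''(x_{i+1})|^q), and
   the elementary inequality (q+1)(q+2) <= 2 * 3^q (q >= 1) shows
   1/12 <= 1/4 (2/((q+1)(q+2)))^{1/q}.  The theorem follows by splitting the
   integral along the partition and summing the cell estimates. *)

Lemma fold_right_Rplus_shift (l : list R) (r : R) :
  fold_right Rplus r l = fold_right Rplus 0 l + r.
Proof. induction l as [|y l IH]; simpl; [lra | rewrite IH; lra]. Qed.

Lemma rsum_0 (g : nat -> R) : rsum 0 g = 0.
Proof. reflexivity. Qed.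

Lemma rsum_S (n : nat) (g : nat -> R) : rsum (S n) g = rsum n g + g n.
Proof.
  unfold rsum. rewrite seq_S, map_app, fold_right_app. simpl.
  rewrite fold_right_Rplus_shift. lra.
Qed.

Lemma rsum_le (n : nat) (g h : nat -> R) :
  (forall i, (i < n)%nat -> g i <= h i) -> rsum n g <= rsum n h.
Proof.
  induction n as [|n IH]; intros Hgh; [rewrite !rsum_0; lra|].
  rewrite !rsum_S. assert (g n <= h n) by (apply Hgh; lia).
  assert (rsum n g <= rsum n h) by (apply IH; intros; apply Hgh; lia). lra.
Qed.

Lemma rsum_minus (n : nat) (g h : nat -> R) :
  rsum n (fun i => g i - h i) = rsum n g - rsum n h.
Proof. induction n as [|n IH]; [rewrite !rsum_0; lra | rewrite !rsum_S, IH; lra]. Qed.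

Lemma rsum_abs (n : nat) (g : nat -> R) :
  Rabs (rsum n g) <= rsum n (fun i => Rabs (g i)).
Proof.
  induction n as [|n IH]; [rewrite !rsum_0, Rabs_R0; lra|].
  rewrite !rsum_S. eapply Rle_trans; [apply Rabs_triang | lra].
Qed.

Lemma rsum_scal (n : nat) (r : R) (g : nat -> R) :
  rsum n (fun i => r * g i) = r * rsum n g.
Proof. induction n as [|n IH]; [rewrite !rsum_0; lra | rewrite !rsum_S, IH; lra]. Qed.

Lemma rpow_ge0 (y p : R) : 0 <= rpow y p.
Proof. unfold rpow. destruct Req_EM_T; [lra | left; apply exp_pos]. Qed.

Lemma rpow_pos (y p : R) : 0 < y -> rpow y p = Rpower y p.
Proof. intros. unfold rpow. destruct Req_EM_T; [lra | reflexivity]. Qed.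

Lemma rpow_0 (p : R) : rpow 0 p = 0.
Proof. unfold rpow. destruct Req_EM_T; [reflexivity | lra]. Qed.

Lemma rpow_inv (y q : R) : 0 <= y -> 0 < q -> rpow (rpow y q) (/ q) = y.
Proof.
  intros Hy Hq. destruct (Req_dec y 0) as [->|Hy0]; [rewrite !rpow_0; reflexivity|].
  rewrite (rpow_pos y), rpow_pos by (try apply exp_pos; lra).
  rewrite Rpower_mult, Rinv_r by lra. apply Rpower_1; lra.
Qed.

Lemma rpow_le (u v p : R) : 0 <= u <= v -> 0 <= p -> rpow u p <= rpow v p.
Proof.
  intros Huv Hp. destruct (Req_dec u 0) as [->|Hu0].
  - rewrite rpow_0. apply rpow_ge0.
  - rewrite !rpow_pos by lra. apply Rle_Rpower_l; lra.
Qed.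

(* (q+1)(q+2) <= 2 3^q for q >= 1: write 3^q = 3 e^{(q-1) ln 3}, use ln 3 >= 1
   and e^{u} = (e^{u/2})^2 >= (1 + u/2)^2. *)
Lemma quadratic_le_pow3 (q : R) : 1 <= q -> (q + 1) * (q + 2) <= 2 * Rpower 3 q.
Proof.
  intros Hq. set (s := q - 1). set (L := ln 3).
  assert (H3q : Rpower 3 q = 3 * (exp (s * L / 2) * exp (s * L / 2))).
  { rewrite <- exp_plus. replace q with (1 + s) at 1 by (unfold s; ring).
    rewrite Rpower_plus, Rpower_1 by lra. unfold Rpower, L. do 2 f_equal. field. }
  assert (HL : 1 <= L).
  { unfold L. rewrite <- (ln_exp 1). apply ln_le; [apply exp_pos | apply exp_le_3]. }
  assert (Hexp := exp_ineq1_le (s * L / 2)).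
  assert (Hs : 0 <= s) by (unfold s; lra).
  assert (s <= s * L) by nra.
  rewrite H3q. replace q with (s + 1) by (unfold s; ring). nra.
Qed.

Lemma trapezoid_constant_ge (q : R) :
  1 <= q -> / 12 <= / 4 * rpow (2 / ((q + 1) * (q + 2))) (/ q).
Proof.
  intros Hq.
  assert (Hprod : 0 < (q + 1) * (q + 2)) by (apply Rmult_lt_0_compat; lra).
  assert (H3q : 0 < Rpower 3 q) by apply exp_pos.
  assert (Hle : Rpower 3 (- q) <= 2 / ((q + 1) * (q + 2))).
  { rewrite Rpower_Ropp. assert (Hquad := quadratic_le_pow3 q Hq).
    apply (Rmult_le_reg_l (Rpower 3 q * ((q + 1) * (q + 2)))); [nra|].
    field_simplify; lra. }
  assert (Hthird : Rpower (Rpower 3 (- q)) (/ q) = / 3).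
  { rewrite Rpower_mult. replace (- q * / q) with (- (1)) by (field; lra).
    rewrite Rpower_Ropp, Rpower_1; lra. }
  assert (Rpower (Rpower 3 (- q)) (/ q) <= Rpower (2 / ((q + 1) * (q + 2))) (/ q)).
  { apply Rle_Rpower_l; [left; apply Rinv_0_lt_compat; lra | split; [apply exp_pos | exact Hle]]. }
  rewrite rpow_pos by (apply Rdiv_lt_0_compat; lra). lra.
Qed.

Lemma deriv_nonpos_nonincreasing (g dg : R -> R) (c t : R) : c <= t ->
  (forall s, c <= s <= t -> is_derive g s (dg s)) ->
  (forall s, c <= s <= t -> dg s <= 0) -> g t <= g c.
Proof.
  intros Hct Hd Hneg. destruct (Req_dec c t) as [<-|Hne]; [lra|].
  destruct (MVT_gen g c t dg) as [xi [Hxi Heq]].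
  - intros y Hy. rewrite Rmin_left, Rmax_right in Hy by lra. apply Hd; lra.
  - intros y Hy. rewrite Rmin_left, Rmax_right in Hy by lra.
    apply derivable_continuous_pt. exists (dg y). apply is_derive_Reals, Hd; lra.
  - rewrite Rmin_left, Rmax_right in Hxi by lra.
    assert (dg xi <= 0) by (apply Hneg; lra). nra.
Qed.

Lemma abs_le_of_deriv_abs_le (g dg h dh : R -> R) (c t : R) : c <= t ->
  g c = 0 -> h c = 0 ->
  (forall s, c <= s <= t -> is_derive g s (dg s)) ->
  (forall s, c <= s <= t -> is_derive h s (dh s)) ->
  (forall s, c <= s <= t -> Rabs (dg s) <= dh s) -> Rabs (g t) <= h t.
Proof.
  intros Hct Hg Hh Hdg Hdh Hb.
  assert (Hupper : g t - h t <= g c - h c).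
  { apply (deriv_nonpos_nonincreasing (fun s => g s - h s) (fun s => dg s - dh s)); auto.
    - intros s Hs. apply (is_derive_minus g h); auto.
    - intros s Hs. specialize (Hb s Hs). apply Rabs_le_between in Hb. lra. }
  assert (Hlower : - g t - h t <= - g c - h c).
  { apply (deriv_nonpos_nonincreasing (fun s => - g s - h s) (fun s => - dg s - dh s)); auto.
    - intros s Hs. apply (is_derive_minus (fun s => - g s) h); auto.
      apply (is_derive_opp g); auto.
    - intros s Hs. specialize (Hb s Hs). apply Rabs_le_between in Hb. lra. }
  apply Rabs_le_between. lra.
Qed.

Section TrapezoidCell.

Variables (f f' f'' : R -> R) (c d e K : R).
Hypothesis Hcd : c < d.
Hypothesis He : 0 < e.
Hypothesis Hder : forall y, c - e < y < d + e ->
  derivable_pt_lim f y (f' y) /\ derivable_pt_lim f' y (f'' y).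
Hypothesis HK : forall s, c <= s <= d -> Rabs (f'' s) <= K.

Lemma cell_is_derive_f (s : R) : c - e < s < d + e -> is_derive f s (f' s).
Proof. intros Hs. apply is_derive_Reals, Hder, Hs. Qed.

Lemma cell_is_derive_f' (s : R) : c - e < s < d + e -> is_derive f' s (f'' s).
Proof. intros Hs. apply is_derive_Reals, Hder, Hs. Qed.

Lemma cell_continuous (y : R) : c - e < y < d + e -> continuous f y.
Proof.
  intros Hy. apply (ex_derive_continuous (K := R_AbsRing) (V := R_NormedModule)).
  exists (f' y). apply cell_is_derive_f, Hy.
Qed.

Lemma cell_is_derive_primitive (s : R) :
  c <= s <= d -> is_derive (fun t => RInt f c t) s (f s).
Proof.
  intros Hs. apply (is_derive_RInt f (fun t => RInt f c t) c s).
  - exists (mkposreal e He). intros y Hy. change (Rabs (y - s) < e) in Hy.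
    apply Rabs_lt_between' in Hy.
    apply (RInt_correct (V := R_CompleteNormedModule)),
          (ex_RInt_continuous (V := R_CompleteNormedModule)).
    intros z Hz. apply cell_continuous.
    unfold Rmin, Rmax in Hz. destruct (Rle_dec c y); lra.
  - apply cell_continuous; lra.
Qed.

Definition cell_psi (t : R) : R := (f t - f c) / 2 - (t - c) / 2 * f' t.

Definition cell_phi (t : R) : R := RInt f c t - (t - c) / 2 * (f c + f t).

Lemma cell_is_derive_psi (s : R) :
  c <= s <= d -> is_derive cell_psi s (- (s - c) * f'' s / 2).
Proof.
  intros Hs.
  assert (H1 := cell_is_derive_f s ltac:(lra)).
  assert (H2 := cell_is_derive_f' s ltac:(lra)).
  unfold cell_psi. auto_derive.
  - split; [exists (f' s); exact H1 | split; [exists (f'' s); exact H2 | exact I]].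
  - replace (Derive (fun t => f t) s) with (f' s) by (symmetry; apply is_derive_unique, H1).
    replace (Derive (fun t => f' t) s) with (f'' s) by (symmetry; apply is_derive_unique, H2).
    field.
Qed.

Lemma cell_is_derive_phi (s : R) : c <= s <= d -> is_derive cell_phi s (cell_psi s).
Proof.
  intros Hs. assert (H1 := cell_is_derive_f s ltac:(lra)).
  assert (Hchord : is_derive (fun t => (t - c) / 2 * (f c + f t)) s
                     ((f c + f s) / 2 + (s - c) / 2 * f' s)).
  { auto_derive; [exists (f' s); exact H1 |].
    replace (Derive (fun t => f t) s) with (f' s) by (symmetry; apply is_derive_unique, H1).
    field. }
  assert (Hdiff := is_derive_minus (K := R_AbsRing) (V := R_NormedModule) _ _ s _ _
                     (cell_is_derive_primitive s Hs) Hchord).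
  unfold cell_phi. replace (cell_psi s) with (minus (f s) ((f c + f s) / 2 + (s - c) / 2 * f' s));
    [exact Hdiff |].
  unfold cell_psi, minus, plus, opp; simpl. field.
Qed.

Lemma cell_psi_bound (t : R) : c <= t <= d -> Rabs (cell_psi t) <= K * (t - c) ^ 2 / 4.
Proof.
  intros Ht.
  apply (abs_le_of_deriv_abs_le cell_psi (fun s => - (s - c) * f'' s / 2)
           (fun s => K * (s - c) ^ 2 / 4) (fun s => K * (s - c) / 2) c t); try lra.
  - unfold cell_psi. field.
  - intros s Hs. apply cell_is_derive_psi; lra.
  - intros s Hs. auto_derive; [exact I | field].
  - intros s Hs. assert (HKs := HK s ltac:(lra)).
    replace (- (s - c) * f'' s / 2) with ((s - c) / 2 * (- f'' s)) by field.
    rewrite Rabs_mult, Rabs_Ropp, (Rabs_right ((s - c) / 2)) by lra. nra.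
Qed.

Lemma trapezoid_cell_error :
  Rabs (RInt f c d - (f c + f d) / 2 * (d - c)) <= K * (d - c) ^ 3 / 12.
Proof.
  replace (RInt f c d - (f c + f d) / 2 * (d - c)) with (cell_phi d)
    by (unfold cell_phi; field).
  apply (abs_le_of_deriv_abs_le cell_phi cell_psi (fun s => K * (s - c) ^ 3 / 12)
           (fun s => K * (s - c) ^ 2 / 4) c d); try lra.
  - unfold cell_phi. rewrite RInt_point. unfold zero; simpl. field.
  - intros s Hs. apply cell_is_derive_phi; lra.
  - intros s Hs. auto_derive; [exact I | field].
  - intros s Hs. apply cell_psi_bound; lra.
Qed.

End TrapezoidCell.

Lemma interior_nbhd (I : R -> Prop) (HI : is_interval I) (a b : R) :
  interior I a -> interior I b -> a < b ->
  exists e, 0 < e /\ forall y, a - e < y < b + e -> interior I y.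
Proof.
  intros [da Ha] [db Hb] Hab. set (e := Rmin da db).
  assert (He : 0 < e) by (apply Rmin_pos; apply cond_pos).
  assert (e <= da) by apply Rmin_l. assert (e <= db) by apply Rmin_r.
  assert (HIa : I a) by (apply Ha; unfold disc; rewrite Rminus_diag, Rabs_R0; apply cond_pos).
  assert (HIb : I b) by (apply Hb; unfold disc; rewrite Rminus_diag, Rabs_R0; apply cond_pos).
  assert (Hin : forall y, a - e < y < b + e -> I y).
  { intros y Hy. destruct (Rle_dec y a).
    - apply Ha. unfold disc. rewrite Rabs_left1 by lra. lra.
    - destruct (Rle_dec b y).
      + apply Hb. unfold disc. rewrite Rabs_right by lra. lra.
      + apply (HI a y b); auto; lra. }
  exists e. split; [exact He|]. intros y Hy.
  assert (Hr : 0 < Rmin (y - (a - e)) (b + e - y)) by (apply Rmin_pos; lra).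
  exists (mkposreal _ Hr). intros z Hz. unfold disc in Hz; simpl in Hz.
  apply Hin. apply Rabs_lt_between' in Hz.
  assert (Rmin (y - (a - e)) (b + e - y) <= y - (a - e)) by apply Rmin_l.
  assert (Rmin (y - (a - e)) (b + e - y) <= b + e - y) by apply Rmin_r. lra.
Qed.

Lemma quasi_convex_endpoint_bound (g : R -> R) (a b c d s : R) :
  quasi_convex_on g a b -> a <= c <= b -> a <= d <= b -> c < d -> c <= s <= d ->
  g s <= Rmax (g c) (g d).
Proof.
  intros Hqc Hc Hd Hcd Hs.
  assert (Hl : 0 <= (d - s) / (d - c) <= 1).
  { split; [apply Rdiv_le_0_compat; lra|].
    apply (Rmult_le_reg_r (d - c)); [lra|]. field_simplify; lra. }
  assert (Hcomb := Hqc c d ((d - s) / (d - c)) Hc Hd Hl).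
  replace ((d - s) / (d - c) * c + (1 - (d - s) / (d - c)) * d) with s in Hcomb
    by (field; lra).
  exact Hcomb.
Qed.

Lemma quasi_convex_pow_bound (h : R -> R) (q a b c d s : R) : 0 < q ->
  quasi_convex_on (fun t => rpow (Rabs (h t)) q) a b ->
  a <= c <= b -> a <= d <= b -> c < d -> c <= s <= d ->
  Rabs (h s) <= rpow (Rmax (rpow (Rabs (h c)) q) (rpow (Rabs (h d)) q)) (/ q).
Proof.
  intros Hq Hqc Hc Hd Hcd Hs.
  rewrite <- (rpow_inv (Rabs (h s)) q) by (try apply Rabs_pos; lra).
  apply rpow_le; [split; [apply rpow_ge0 |] | left; apply Rinv_0_lt_compat; lra].
  exact (quasi_convex_endpoint_bound _ a b c d s Hqc Hc Hd Hcd Hs).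
Qed.

Lemma partition_in_range (a b : R) (n : nat) (x : nat -> R) :
  is_partition a b n x -> forall i, (i <= n)%nat -> a <= x i <= b.
Proof.
  intros [Hx0 [Hxn Hinc]].
  assert (Hge : forall i, (i <= n)%nat -> a <= x i).
  { induction i as [|i IH]; intros Hi; [lra|].
    assert (x i < x (S i)) by (apply Hinc; lia). assert (a <= x i) by (apply IH; lia). lra. }
  assert (Hle : forall k i, (i + k = n)%nat -> x i <= b).
  { induction k as [|k IH]; intros i Hi; [replace i with n by lia; lra|].
    assert (x i < x (S i)) by (apply Hinc; lia). assert (x (S i) <= b) by (apply IH; lia). lra. }
  intros i Hi. split; [apply Hge, Hi | apply (Hle (n - i)%nat); lia].
Qed.

Lemma trap_err_split (f : R -> R) (a b : R) (pr : Riemann_integrable f a b)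
  (n : nat) (x : nat -> R) :
  is_partition a b n x -> (forall z, a <= z <= b -> continuous f z) ->
  trap_err f a b pr n x =
  rsum n (fun i => RInt f (x i) (x (S i)) - (f (x i) + f (x (S i))) / 2 * (x (S i) - x i)).
Proof.
  intros Hd Hcont. assert (Hrange := partition_in_range a b n x Hd).
  destruct Hd as [Hx0 [Hxn _]].
  assert (Hab : a <= b) by (assert (Hrange0 := Hrange 0%nat ltac:(lia)); lra).
  assert (Hex : forall u v, a <= u <= b -> a <= v <= b -> ex_RInt f u v).
  { intros u v Hu Hv. apply (ex_RInt_continuous (V := R_CompleteNormedModule)).
    intros z Hz. apply Hcont. unfold Rmin, Rmax in Hz. destruct (Rle_dec u v); lra. }
  assert (Hchasles : forall k, (k <= n)%nat ->
            RInt f a (x k) = rsum k (fun i => RInt f (x i) (x (S i)))).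
  { induction k as [|k IH]; intros Hk.
    - rewrite Hx0. apply (RInt_point (V := R_CompleteNormedModule)).
    - rewrite rsum_S, <- IH by lia.
      symmetry. apply (RInt_Chasles (V := R_CompleteNormedModule));
        apply Hex; try lra; apply Hrange; lia. }
  unfold trap_err, trap. rewrite rsum_minus, <- Hchasles, Hxn, (RInt_Reals f a b pr) by lia.
  reflexivity.
Qed.

Theorem proposition3
  (I : R -> Prop) (HI : is_interval I) (HI0 : forall x, I x -> 0 <= x)
  (f f' f'' : R -> R)
  (Hf' : forall x, interior I x -> derivable_pt_lim f x (f' x))
  (Hf'' : forall x, interior I x -> derivable_pt_lim f' x (f'' x))
  (a b : R) (Ha : interior I a) (Hb : interior I b) (Hab : a < b)
  (q : R) (Hq : 1 <= q)
  (Hqc : quasi_convex_on (fun t => rpow (Rabs (f'' t)) q) a b)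
  (n : nat) (x : nat -> R) (Hd : is_partition a b n x)
  (pr : Riemann_integrable f a b) :
  Rabs (trap_err f a b pr n x) <=
    / 4 * rpow (2 / ((q + 1) * (q + 2))) (/ q) *
    rsum n (fun i => (x (S i) - x i) ^ 3 *
      rpow (Rmax (rpow (Rabs (f'' (x i))) q) (rpow (Rabs (f'' (x (S i)))) q)) (/ q)).
Proof.
  destruct (interior_nbhd I HI a b Ha Hb Hab) as [e [He Hint]].
  assert (Hder : forall y, a - e < y < b + e ->
            derivable_pt_lim f y (f' y) /\ derivable_pt_lim f' y (f'' y))
    by (intros y Hy; split; [apply Hf' | apply Hf'']; apply Hint, Hy).
  assert (Hrange := partition_in_range a b n x Hd).
  rewrite (trap_err_split f a b pr n x Hd) by
    (intros z Hz; apply (cell_continuous f f' f'' a b e); auto; lra).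
  rewrite <- rsum_scal. eapply Rle_trans; [apply rsum_abs | apply rsum_le].
  intros i Hi. destruct Hd as [_ [_ Hinc]].
  assert (Hcd := Hinc i Hi).
  assert (Hc := Hrange i ltac:(lia)). assert (Hdd := Hrange (S i) ltac:(lia)).
  set (K := rpow (Rmax (rpow (Rabs (f'' (x i))) q) (rpow (Rabs (f'' (x (S i)))) q)) (/ q)).
  assert (Hcell := trapezoid_cell_error f f' f'' (x i) (x (S i)) e K Hcd He
    ltac:(intros y Hy; apply Hder; lra)
    ltac:(intros s Hs; apply (quasi_convex_pow_bound f'' q a b); auto; lra)).
  assert (Hconst := trapezoid_constant_ge q Hq).
  assert (0 <= K) by apply rpow_ge0.
  assert (0 <= (x (S i) - x i) ^ 3) by (apply pow_le; lra).
  assert (0 <= (x (S i) - x i) ^ 3 * K) by (apply Rmult_le_pos; lra).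
  eapply Rle_trans; [exact Hcell | nra].
Qed.
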